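(* For any $n\geq1$ and any odd $b\geq1$, the set $R_n(b)$ listed in $\prec$ order (increasing) is a $3$-adjacent Gray code: any two consecutive sequences in the list differ in at most $3$ positions, and these positions are consecutive.
   Context: A restricted growth function of length $n$ is an integer sequence $s_1\ldots s_n$ with $s_1=0$ and $0\leq s_{i+1}\leq \max\{s_j\}_{j=1}^i+1$ for $1\leq i\leq n-1$; $R_n$ is the set of these. For an integer $b\geq1$, $R_n(b)=\{s_1\ldots s_n\in R_n: \max_i s_i\leq b\}$. The Reflected Gray Code Order $\prec$ on length-$n$ sequences of nonnegative integers: $s_1\ldots s_n\prec t_1\ldots t_n$ if, for the smallest $k$ with $s_k\neq t_k$, either $\sum_{i=1}^{k-1}s_i$ is even and $s_k<t_k$, or $\sum_{i=1}^{k-1}s_i$ is odd and $s_k>t_k$. A list of same-length sequences is a $d$-Gray code if the Hamming distance (number of differing positions) between successive sequences is at most $d$; it is a $d$-adjacent Gray code if in addition the positions where successive sequences differ are adjacent. *)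

(* Sequences are [seq nat], positions are 0-indexed. *)
From mathcomp Require Import all_boot.
Set Implicit Arguments. Unset Strict Implicit. Unset Printing Implicit Defensive.

Definition smax (s : seq nat) : nat := foldr maxn 0 s.

(* restricted growth function: s_1 = 0 and s_{i+1} <= max(s_1..s_i) + 1
   (here 0-indexed: s`_0 = 0 and s`_(i+1) <= max(s`_0..s`_i) + 1) *)
Definition is_rgf (s : seq nat) : bool :=
  (nth 0 s 0 == 0) &&
  all (fun i => nth 0 s i.+1 <= (smax (take i.+1 s)).+1) (iota 0 (size s).-1).

Fixpoint all_seqs (n b : nat) : seq (seq nat) :=
  match n with
  | 0 => [:: [::]]
  | n'.+1 => [seq x :: t | x <- iota 0 b.+1, t <- all_seqs n' b]
  end.

Definition Rnb (n b : nat) : seq (seq nat) :=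
  [seq s <- all_seqs n b | is_rgf s && (smax s <= b)].

Definition rgc_lt (s t : seq nat) : bool :=
  has (fun k =>
         [&& all (fun i => nth 0 s i == nth 0 t i) (iota 0 k),
             nth 0 s k != nth 0 t k &
             if odd (sumn (take k s)) then nth 0 t k < nth 0 s k
             else nth 0 s k < nth 0 t k])
      (iota 0 (size s)).

Definition rgc_le (s t : seq nat) : bool := (s == t) || rgc_lt s t.

Definition Rnb_list (n b : nat) : seq (seq nat) := sort rgc_le (Rnb n b).

Definition diff_pos (s t : seq nat) : seq nat :=
  [seq i <- iota 0 (maxn (size s) (size t)) | nth 0 s i != nth 0 t i].

Definition hamming (s t : seq nat) : nat := size (diff_pos s t).

Definition adjacent_pos (s t : seq nat) : Prop :=
  forall i j k, i \in diff_pos s t -> j \in diff_pos s t ->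
    i <= k <= j -> k \in diff_pos s t.

Definition gray_code (d : nat) (L : seq (seq nat)) : Prop :=
  forall i, i.+1 < size L -> hamming (nth [::] L i) (nth [::] L i.+1) <= d.

Definition adjacent_gray_code (d : nat) (L : seq (seq nat)) : Prop :=
  gray_code d L /\
  forall i, i.+1 < size L -> adjacent_pos (nth [::] L i) (nth [::] L i.+1).

From mathcomp Require Import all_boot zify.

(* After a prefix with maximum m and even sum, the next entry x runs through
   0, ..., min(b, m+1), and the tails following x are listed recursively,
   reversed exactly when x is odd.  This list is sorted for the order and
   enumerates R_n(b), so it is the sorted list.  Inside the block of x,
   consecutive elements differ as their tails do.  Between the blocks of x and
   x+1 only the boundary elements matter: for odd x they are x0...0 and
   (x+1)0...0; for even x they are x and x+1 followed by the last elements of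
   the recursive lists, which can be computed explicitly, and because b is odd
   they differ in at most three consecutive positions. *)

Set Implicit Arguments.
Unset Strict Implicit.
Unset Printing Implicit Defensive.

Section SortedFlatten.

Variables (T : Type) (x0 : T) (e : rel T).

Lemma head_rev (s : seq T) : head x0 (rev s) = last x0 s.
Proof. by case/lastP: s => [|s x]; rewrite ?rev_rcons ?last_rcons. Qed.

Lemma sorted_flatten (ss : seq (seq T)) :
  all (fun s => 0 < size s) ss -> all (sorted e) ss ->
  sorted (fun s1 s2 => e (last x0 s1) (head x0 s2)) ss -> sorted e (flatten ss).
Proof.
elim: ss => [|s ss IH] //= /andP[s_ne ss_ne] /andP[s_sorted ss_sorted] links.
have := IH ss_ne ss_sorted (path_sorted links).
case: ss ss_ne links {IH ss_sorted} => [|s' ss] /=; first by rewrite cats0.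
case: s s_ne s_sorted => [|a s] // _ /= s_path.
case: s' => [|c s'] //= _ /andP[link _] rest_path.
by rewrite cat_path s_path /= link.
Qed.

End SortedFlatten.

Lemma sorted_iota (r : rel nat) m n :
  (forall i, m <= i < m + n -> r i i.+1) -> sorted r (iota m n.+1).
Proof.
move=> r_succ; apply/(sortedP 0) => i; rewrite size_iota ltnS => lt_in.
by rewrite !nth_iota ?addnS; [apply: r_succ | ..]; lia.
Qed.

(* [p] is the parity of the sum of the common prefix already compared. *)
Fixpoint gray_lt (p : bool) (s t : seq nat) : bool :=
  match s, t with
  | x :: s', y :: t' =>
      if x == y then gray_lt (p (+) odd x) s' t' else if p then y < x else x < y
  | _, _ => false
  end.

Lemma gray_ltNp p s t : gray_lt (~~ p) s t = gray_lt p t s.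
Proof.
elim: s t p => [|x s IH] [|y t] p //=.
rewrite eq_sym; case: eqVneq => [->|_]; first by rewrite addNb IH.
by case: p.
Qed.

Lemma gray_lt_irr p : irreflexive (gray_lt p).
Proof. by move=> s; elim: s p => [|x s IH] p //=; rewrite eqxx IH. Qed.

Lemma gray_lt_trans p : transitive (gray_lt p).
Proof.
move=> t s u; elim: s p t u => [|x s IH] p [|y t] [|z u] //=.
case: (eqVneq x y) => [<-|neq_xy].
  by case: eqVneq => [_ /=|_ _ //]; apply: IH.
case: (eqVneq y z) => [<-|_]; first by rewrite (negbTE neq_xy) => + _.
by case: eqVneq => [<-|_]; case: p; lia.
Qed.

Lemma gray_lt_asym p s t : gray_lt p s t -> gray_lt p t s -> False.
Proof. by move=> lt_st /(gray_lt_trans lt_st); rewrite gray_lt_irr. Qed.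

Lemma gray_lt_total p s t :
  size s = size t -> [\/ s = t, gray_lt p s t | gray_lt p t s].
Proof.
elim: s p t => [|x s IH] p [|y t] //=; first by constructor.
move=> [] /(IH (p (+) odd x)) {IH}; rewrite [y == x]eq_sym.
case: (eqVneq x y) => [<-|neq_xy] IH.
  by case: IH => [->|lt_st|lt_ts]; [constructor 1 | constructor 2 | constructor 3].
by case: p {IH}; case: ltngtP neq_xy => // _ _;
  [constructor 2 | constructor 3 | constructor 2 | constructor 3].
Qed.

Definition rgc_ltp (p : bool) (s t : seq nat) : bool :=
  has (fun k =>
         [&& all (fun i => nth 0 s i == nth 0 t i) (iota 0 k),
             nth 0 s k != nth 0 t k &
             if p (+) odd (sumn (take k s)) then nth 0 t k < nth 0 s k
             else nth 0 s k < nth 0 t k])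
      (iota 0 (size s)).

Lemma rgc_ltpE p s t : size s = size t -> rgc_ltp p s t = gray_lt p s t.
Proof.
elim: s p t => [|x s IH] p [|y t] //= [] size_st.
rewrite /rgc_ltp /= (iotaDl 1 0) has_map /= addbF.
case: (eqVneq x y) => [<-|neq_xy] /=.
  rewrite -IH // /rgc_ltp; apply: eq_has => k.
  by rewrite /= eqxx /= (iotaDl 1 0) all_map oddD addbA.
rewrite (@eq_has _ _ pred0) ?has_pred0 ?orbF; first by case: p.
by move=> k /=; rewrite (negbTE neq_xy).
Qed.

Lemma rgc_leE s t : size s = size t -> rgc_le s t = (s == t) || gray_lt false s t.
Proof. by move=> size_st; rewrite /rgc_le -rgc_ltpE. Qed.

Lemma rgc_le_total n : {in [pred s : seq nat | size s == n] &, total rgc_le}.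
Proof.
move=> s t /eqP size_s /eqP size_t; rewrite !rgc_leE ?size_s ?size_t //.
have [->|->|->] := gray_lt_total false (etrans size_s (esym size_t)).
all: by rewrite ?eqxx ?orbT.
Qed.

Lemma rgc_le_trans n : {in [pred s : seq nat | size s == n] & &, transitive rgc_le}.
Proof.
move=> t s u /eqP size_t /eqP size_s /eqP size_u.
rewrite !rgc_leE ?size_s ?size_t ?size_u //.
case/orP => [/eqP-> //|lt_st]; case/orP => [/eqP<-|lt_tu]; first by rewrite lt_st orbT.
by rewrite (gray_lt_trans lt_st lt_tu) orbT.
Qed.

Lemma rgc_le_anti n : {in [pred s : seq nat | size s == n] &, antisymmetric rgc_le}.
Proof.
move=> s t /eqP size_s /eqP size_t; rewrite !rgc_leE ?size_s ?size_t //.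
case/andP => /orP[/eqP-> //|lt_st] /orP[/eqP-> //|lt_ts].
by case: (gray_lt_asym lt_st lt_ts).
Qed.

Lemma diff_posC s t : diff_pos s t = diff_pos t s.
Proof. by rewrite /diff_pos maxnC; apply: eq_filter => i; rewrite eq_sym. Qed.

Lemma diff_pos_cons x y s t :
  diff_pos (x :: s) (y :: t) = nseq (x != y) 0 ++ map succn (diff_pos s t).
Proof.
rewrite /diff_pos /= maxnSS /= (iotaDl 1 0) filter_map.
by case: (x != y).
Qed.

Lemma diff_pos_catr u v w :
  size u = size v -> diff_pos (u ++ w) (v ++ w) = diff_pos u v.
Proof.
move=> size_uv; rewrite /diff_pos !size_cat -size_uv !maxnn iotaD filter_cat.
rewrite [X in _ ++ X](@eq_in_filter _ _ pred0); last first.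
  move=> i; rewrite mem_iota /= !nth_cat -size_uv => /andP[].
  by rewrite leqNgt => /negbTE-> _; rewrite eqxx.
rewrite filter_pred0 cats0; apply: eq_in_filter => i; rewrite mem_iota /= => lt_iu.
by rewrite !nth_cat -size_uv lt_iu.
Qed.

Lemma diff_pos_all2_neq u v :
  all2 (fun a c => a != c) u v -> diff_pos u v = iota 0 (size u).
Proof.
elim: u v => [|a u IH] [|c v] //= /andP[neq_ac /IH diff_uv].
by rewrite diff_pos_cons neq_ac diff_uv -(iotaDl 1).
Qed.

Definition gray_step (s t : seq nat) : bool :=
  let d := diff_pos s t in (size d <= 3) && (d == iota (head 0 d) (size d)).

Lemma gray_stepC : symmetric gray_step.
Proof. by move=> s t; rewrite /gray_step diff_posC. Qed.

Lemma gray_step_cons x s t : gray_step s t -> gray_step (x :: s) (x :: t).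
Proof.
rewrite /gray_step diff_pos_cons eqxx /= size_map.
case: (diff_pos s t) => [|i d] //= /andP[le_d3 /eqP[d_iota]].
by rewrite le_d3 [in map _ d]d_iota -(iotaDl 1) add1n eqxx.
Qed.

Lemma gray_step_block (u v w : seq nat) :
  size u = size v -> size u <= 3 -> all2 (fun a c => a != c) u v ->
  gray_step (u ++ w) (v ++ w).
Proof.
move=> size_uv le_u3 neq_uv.
rewrite /gray_step diff_pos_catr // diff_pos_all2_neq // size_iota le_u3.
by case: (size u) => [|n]; rewrite /= eqxx.
Qed.

Lemma gray_step_head x y w : x != y -> gray_step (x :: w) (y :: w).
Proof.
by move=> neq_xy; apply: (@gray_step_block [:: x] [:: y]) => //=; rewrite neq_xy.
Qed.

Lemma gray_step_adjacent s t :
  gray_step s t -> hamming s t <= 3 /\ adjacent_pos s t.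
Proof.
rewrite /gray_step /hamming /adjacent_pos => /andP[le_d3 /eqP d_iota].
by split=> // i j k; rewrite d_iota !mem_iota; lia.
Qed.

Fixpoint rg_tail (m : nat) (t : seq nat) : bool :=
  if t is y :: t' then (y <= m.+1) && rg_tail (maxn m y) t' else true.

Lemma rg_tailE m t :
  rg_tail m t =
  all (fun i => nth 0 t i <= (maxn m (smax (take i t))).+1) (iota 0 (size t)).
Proof.
elim: t m => [|y t IH] m //=; rewrite maxn0 IH (iotaDl 1 0) all_map.
by congr andb; apply: eq_all => i /=; rewrite maxnA.
Qed.

Lemma is_rgf_cons x t : is_rgf (x :: t) = (x == 0) && rg_tail x t.
Proof. by rewrite /is_rgf rg_tailE. Qed.

Lemma smax_le s b : (smax s <= b) = all (fun x => x <= b) s.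
Proof. by elim: s => [|x s IH] //=; rewrite geq_max IH. Qed.

Lemma all_seqsS n b :
  all_seqs n.+1 b = [seq x :: t | x <- iota 0 b.+1, t <- all_seqs n b].
Proof. by []. Qed.

Lemma mem_all_seqs n b s :
  (s \in all_seqs n b) = (size s == n) && all (fun x => x <= b) s.
Proof.
elim: n s => [|n IH] s; first by case: s.
rewrite all_seqsS; apply/allpairsP/idP => [[[x t] [+ + ->]]|].
  by rewrite mem_iota IH /= eqSS => x_le_b /andP[-> ->]; lia.
move=> /andP[]; case: s => [|y s] // size_ys /andP[y_le_b s_le_b].
by exists (y, s); rewrite mem_iota IH /=; split=> //; apply/andP.
Qed.

Lemma uniq_all_seqs n b : uniq (all_seqs n b).
Proof.
elim: n => [|n IH] //; rewrite all_seqsS.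
apply: allpairs_uniq => //; first exact: iota_uniq.
by move=> [x t] [y u] _ _ /= [-> ->].
Qed.

(* The tails of length [k] with entries at most [b] extending a restricted
   growth prefix of maximum [m], in Gray order when the prefix sum is even. *)
Fixpoint rgc_tails (b k m : nat) : seq (seq nat) :=
  if k is k'.+1 then
    flatten [seq map (cons x) (if odd x then rev (rgc_tails b k' (maxn m x))
                               else rgc_tails b k' (maxn m x))
            | x <- iota 0 (minn b m.+1).+1]
  else [:: [::]].

Definition rgc_block b k m x : seq (seq nat) :=
  map (cons x) (if odd x then rev (rgc_tails b k (maxn m x))
                else rgc_tails b k (maxn m x)).

Lemma rgc_tailsS b k m :
  rgc_tails b k.+1 m =
  flatten [seq rgc_block b k m x | x <- iota 0 (minn b m.+1).+1].
Proof. by []. Qed.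

Lemma mem_rgc_tails b k m t :
  (t \in rgc_tails b k m) =
  [&& size t == k, rg_tail m t & all (fun x => x <= b) t].
Proof.
elim: k m t => [|k IH] m t; first by case: t.
rewrite rgc_tailsS; apply/flattenP/idP => [[_ /mapP[x x_in ->] /mapP[u u_in ->]]|].
  have {u_in} : u \in rgc_tails b k (maxn m x) by case: ifP u_in; rewrite ?mem_rev.
  rewrite IH /= eqSS => /and3P[-> -> ->]; rewrite !andbT.
  by move: x_in; rewrite mem_iota; lia.
case: t => [|y t] // /and3P[size_t /andP[y_le rg_t] /andP[y_le_b t_le_b]].
exists (rgc_block b k m y).
  by apply/mapP; exists y => //; rewrite mem_iota; lia.
by apply/mapP; exists t => //; case: ifP => _; rewrite ?mem_rev IH; apply/and3P.
Qed.

Lemma rgc_tails_head b k m : exists s, rgc_tails b k m = nseq k 0 :: s.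
Proof.
elim: k m => [|k IH] m; first by exists [::].
by rewrite rgc_tailsS /= /rgc_block /=; have [s ->] := IH (maxn m 0); eexists.
Qed.

Lemma size_rgc_block_gt0 b k m x : 0 < size (rgc_block b k m x).
Proof.
have [s L_eq] := rgc_tails_head b k (maxn m x).
by rewrite size_map; case: ifP => _; rewrite ?size_rev L_eq.
Qed.

Lemma head_rgc_block b k m x :
  head [::] (rgc_block b k m x) =
  x :: (if odd x then last [::] (rgc_tails b k (maxn m x)) else nseq k 0).
Proof.
have [s L_eq] := rgc_tails_head b k (maxn m x).
rewrite /rgc_block; case: ifP => _; last by rewrite L_eq.
by rewrite L_eq rev_cons /= -head_rev; case: (rev s).
Qed.

Lemma last_rgc_block b k m x :
  last [::] (rgc_block b k m x) =
  x :: (if odd x then nseq k 0 else last [::] (rgc_tails b k (maxn m x))).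
Proof.
have [s L_eq] := rgc_tails_head b k (maxn m x).
rewrite /rgc_block L_eq; case: ifP => _; first by rewrite rev_cons map_rcons last_rcons.
by rewrite /= last_map.
Qed.

Lemma last_rgc_tails b k m :
  last [::] (rgc_tails b k.+1 m) = last [::] (rgc_block b k m (minn b m.+1)).
Proof.
rewrite rgc_tailsS -addn1 iotaD map_cat flatten_cat last_cat add0n /= cats0.
by case: (rgc_block b k m _) (size_rgc_block_gt0 b k m (minn b m.+1)).
Qed.

Lemma sorted_rgc_tailsS (e : rel (seq nat)) b k m :
  (forall x, sorted e (rgc_block b k m x)) ->
  (forall x, x < minn b m.+1 ->
     e (last [::] (rgc_block b k m x)) (head [::] (rgc_block b k m x.+1))) ->
  sorted e (rgc_tails b k.+1 m).
Proof.
move=> blocks_sorted links; rewrite rgc_tailsS; apply: (@sorted_flatten _ [::]).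
- by apply/allP => _ /mapP[x _ ->]; apply: size_rgc_block_gt0.
- by apply/allP => _ /mapP[x _ ->].
by rewrite sorted_map; apply: sorted_iota => x /andP[_]; apply: links.
Qed.

Lemma sorted_rgc_tails_gray_lt b k m : sorted (gray_lt false) (rgc_tails b k m).
Proof.
elim: k m => [|k IH] m //; apply: sorted_rgc_tailsS => [x|x _].
  rewrite sorted_map (@eq_sorted _ _ (gray_lt (odd x))) => [|s t /=];
    last by rewrite eqxx.
  case: ifP => _ //; rewrite rev_sorted (@eq_sorted _ _ (gray_lt false)) //.
  by move=> s t; rewrite -gray_ltNp.
by rewrite last_rgc_block head_rgc_block /= (ltn_eqF (ltnSn x)) ltnSn.
Qed.

Lemma gray_step_last_rgc_tails b k m x : odd b -> ~~ odd x -> x < minn b m.+1 ->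
  gray_step (x :: last [::] (rgc_tails b k (maxn m x)))
            (x.+1 :: last [::] (rgc_tails b k (maxn m x.+1))).
Proof.
move=> b_odd x_even lt_x_bm.
have change_head w : gray_step (x :: w) (x.+1 :: w) by apply: gray_step_head; lia.
have [lt_xm|le_mx] := ltnP x m; first by rewrite (maxn_idPl lt_xm).
have lt_xb : x < b by move: lt_x_bm; rewrite leq_min => /andP[].
have {le_mx lt_x_bm} x_eq_m : x = m by lia.
subst x; rewrite (maxn_idPr (leqnSn m)).
case: k => [|k]; first exact: change_head.
rewrite !last_rgc_tails !last_rgc_block (minn_idPr lt_xb) oddS x_even.
have [->|neq_b] := eqVneq b m.+1.
  by rewrite (minn_idPl (leqnSn _)) oddS x_even; apply: change_head.
(* For b = m + 2 the right tail would continue with the even entry m + 2. *)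
have lt_m2b : m.+2 < b by move: b_odd x_even neq_b; lia.
rewrite (minn_idPr (ltnW lt_m2b)) !oddS negbK (negbTE x_even).
rewrite (maxn_idPr (leqnSn _)).
case: k => [|k].
  by apply: (@gray_step_block [:: m; m.+1] [:: m.+1; m.+2]) => //=; lia.
rewrite last_rgc_tails last_rgc_block (minn_idPr lt_m2b) !oddS negbK x_even.
by apply: (@gray_step_block [:: m; m.+1; 0] [:: m.+1; m.+2; m.+3]) => //=; lia.
Qed.

Lemma sorted_rgc_tails_gray_step b k m :
  odd b -> sorted gray_step (rgc_tails b k m).
Proof.
move=> b_odd; elim: k m => [|k IH] m //; apply: sorted_rgc_tailsS => [x|x lt_x_bm].
  rewrite sorted_map; apply: (sub_sorted (@gray_step_cons x)).
  by case: ifP => _ //; rewrite rev_sorted (eq_sorted (fun s t => gray_stepC t s)).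
rewrite last_rgc_block head_rgc_block /=; case: ifP => x_odd.
  by apply: gray_step_head; lia.
by apply: gray_step_last_rgc_tails; rewrite ?x_odd.
Qed.

Lemma mem_map_cons (T : eqType) (x y : T) (t : seq T) (L : seq (seq T)) :
  (y :: t \in map (cons x) L) = (y == x) && (t \in L).
Proof.
apply/mapP/andP => [[u u_in [-> ->]]|[/eqP-> t_in]]; last by exists t.
by rewrite eqxx.
Qed.

Lemma mem_Rnb n b s : (s \in Rnb n.+1 b) = (s \in map (cons 0) (rgc_tails b n 0)).
Proof.
rewrite mem_filter mem_all_seqs smax_le; case: s => [|x t].
  by rewrite andbC /=; apply/esym/mapP => -[].
rewrite (@mem_map_cons nat) is_rgf_cons mem_rgc_tails /= eqSS.
case: eqP => [->|] //=.
by case: (size t == n); case: (rg_tail 0 t); case: (all _ t).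
Qed.

Lemma Rnb_listE n b : Rnb_list n.+1 b = map (cons 0) (rgc_tails b n 0).
Proof.
set G := map (cons 0) _.
pose sized := [pred s : seq nat | size s == n.+1].
have G_sized : all sized G.
  by apply/allP => _ /mapP[t + ->]; rewrite mem_rgc_tails inE /= eqSS => /and3P[].
have R_sized : all sized (Rnb n.+1 b).
  by apply/allP => s; rewrite mem_Rnb => /(allP G_sized).
have G_lt : sorted (gray_lt false) G.
  by rewrite sorted_map; apply: sorted_rgc_tails_gray_lt.
have sort_sized : {subset sort rgc_le (Rnb n.+1 b) <= sized}.
  by move=> s; rewrite mem_sort => /(allP R_sized).
apply: (sorted_eq_in (leT := rgc_le)).
- move=> y x z /sort_sized ? /sort_sized ? /sort_sized ?.
  exact: (@rgc_le_trans n.+1).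
- by move=> s t /sort_sized ? /sort_sized ?; apply: (@rgc_le_anti n.+1).
- exact: (sort_sorted_in (@rgc_le_total n.+1)).
- apply: sub_in_sorted G_sized G_lt => s t /eqP size_s /eqP size_t lt_st.
  by rewrite rgc_leE ?size_s ?size_t // lt_st orbT.
rewrite perm_sort uniq_perm ?filter_uniq ?uniq_all_seqs //.
  exact: sorted_uniq (@gray_lt_trans false) (@gray_lt_irr false) _ G_lt.
exact: mem_Rnb.
Qed.

Theorem theorem1 (n b : nat) : 1 <= n -> 1 <= b -> odd b ->
  adjacent_gray_code 3 (Rnb_list n b).
Proof.
case: n => // n _ _ b_odd.
have /(sortedP [::]) steps : sorted gray_step (Rnb_list n.+1 b).
  rewrite Rnb_listE sorted_map; apply: (sub_sorted (@gray_step_cons 0)).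
  exact: sorted_rgc_tails_gray_step.
by split=> i /steps /gray_step_adjacent[].
Qed.
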